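(* Let $G$ be a linear reductive algebraic group over $\mathbb{C}$ with maximal torus $T\subseteq B$, root system $\Phi$ with positive roots $\Phi^+$ and simple roots $\Delta$, and Weyl group $W$. Let $S\in\mathfrak{h}=\mathrm{Lie}(T)$ be a non-regular semisimple element such that $M=Z_G(S)$ is a standard Levi subgroup. Let $v\in{}^MW$, let $L=L_v$ and write $v=x_vw_v$ with $w_v$ the longest element of $W_L$ and $x_v\in W^L$. Then $\tau=x_vz$ is an element of ${}^MW$ for every $z\in W_L$.
   Context: For $w\in W$, $N(w)=\{\gamma\in\Phi^+ : w(\gamma)\in-\Phi^+\}$ and $\ell(w)$ is the length. For a subset $\Delta_L\subseteq\Delta$, $L$ denotes the standard Levi subgroup, $\Phi_L$ its root subsystem with $\Phi_L^+=\Phi_L\cap\Phi^+$, $W_L=\langle s_\alpha:\alpha\in\Delta_L\rangle$, ${}^LW=\{v\in W: N(v^{-1})\subseteq\Phi^+\setminus\Phi_L^+\}$, $W^L=\{v\in W: N(v)\subseteq\Phi^+\setminus\Phi_L^+\}$. The Levi $M=Z_G(S)$ has $\Phi_M=\{\gamma:\gamma(S)=0\}$ and $\Delta_M=\{\alpha\in\Delta:\alpha(S)=0\}$. For $v\in W$, $R(v)=N(v)\cap\Delta$ and $L_v$ is the standard Levi subgroup with $\Delta_{L_v}=R(v)$; $v$ factors uniquely as $v=x_vw_v$ with $x_v\in W^{L_v}$, $w_v$ the longest element of $W_{L_v}$, $\ell(v)=\ell(x_v)+\ell(w_v)$. *)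

From HB Require Import structures.
From mathcomp Require Import all_boot all_order all_algebra.
Set Implicit Arguments. Unset Strict Implicit. Unset Printing Implicit Defensive.
Import Order.TTheory GRing.Theory Num.Theory.
Local Open Scope ring_scope.

(* The root datum (X, Phi, X^vee, Phi^vee) of G w.r.t. T:
   X = X^*(T) = Z^n (column vectors), X^vee = X_*(T) = Z^n,
   pairing <x, y> = y^T x, coroot map [cor : alpha |-> alpha^vee]. *)
Section RootDatum.
Variable n : nat.
Notation vec := 'cV[int]_n.

Definition pairing (x y : vec) : int := (y^T *m x) 0 0.

Definition refl (a av : vec) : 'M[int]_n := 1%:M - a *m av^T.

Variable Phi : seq vec.
Variable cor : vec -> vec.

Definition is_root_datum : Prop :=
  uniq Phi /\ 0 \notin Phi /\
  (forall a, a \in Phi -> pairing a (cor a) = 2) /\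
  (forall a b, a \in Phi -> b \in Phi -> cor a = cor b -> a = b) /\
  (forall a b, a \in Phi -> b \in Phi -> refl a (cor a) *m b \in Phi) /\
  (forall a b, a \in Phi -> b \in Phi -> refl (cor a) a *m cor b \in map cor Phi) /\
  (forall a (c : int), a \in Phi -> c *: a \in Phi -> c = 1 \/ c = -1).

Definition sref (a : vec) : 'M[int]_n := refl a (cor a).

Inductive gen_by (gens : seq vec) : 'M[int]_n -> Prop :=
| gen_by1 : gen_by gens 1%:M
| gen_byS a w : a \in gens -> gen_by gens w -> gen_by gens (sref a *m w).

Definition Weyl (w : 'M[int]_n) : Prop := gen_by Phi w.

(* Positive system Phi^+ (determined by B), given by a regular functional lam *)
Variable lam : 'rV[int]_n.
Definition regular_functional : Prop := {in Phi, forall a, (lam *m a) 0 0 != 0}.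
Definition posroots : seq vec := [seq a <- Phi | 0 < (lam *m a) 0 0].
Definition simple_roots : seq vec :=
  [seq a <- posroots | ~~ has (fun b => (a - b) \in posroots) posroots].

Definition word_prod (s : seq vec) : 'M[int]_n := foldr (fun a w => sref a *m w) 1%:M s.
Definition has_length (w : 'M[int]_n) (k : nat) : Prop :=
  (exists s, [/\ all (fun a => a \in simple_roots) s, size s = k & word_prod s = w]) /\
  (forall s, all (fun a => a \in simple_roots) s -> word_prod s = w -> (k <= size s)%N).

Definition longest_in (DL : seq vec) (w : 'M[int]_n) : Prop :=
  gen_by DL w /\
  forall u k j, gen_by DL u -> has_length u k -> has_length w j -> (k <= j)%N.

(* g lies in the span of DL (so g \in Phi_L when g \in Phi) *)
Definition in_span (DL : seq vec) (g : vec) : Prop :=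
  exists c : vec -> int, g = \sum_(a <- DL) c a *: a.

Definition inv_set (w : 'M[int]_n) (g : vec) : Prop :=
  g \in posroots /\ - (w *m g) \in posroots.

(* v \in ^L W :  N(v^{-1}) \subseteq Phi^+ \ Phi_L^+ *)
Definition left_min (DL : seq vec) (v : 'M[int]_n) : Prop :=
  Weyl v /\ forall g, inv_set (invmx v) g -> ~ in_span DL g.

(* v \in W^L :  N(v) \subseteq Phi^+ \ Phi_L^+ *)
Definition right_min (DL : seq vec) (v : 'M[int]_n) : Prop :=
  Weyl v /\ forall g, inv_set v g -> ~ in_span DL g.

Definition Rdesc (v : 'M[int]_n) : seq vec :=
  [seq a <- simple_roots | - (v *m a) \in posroots].

End RootDatum.

(* An element S of h = X_*(T) \otimes C = C^n; gamma(S) = sum_i gamma_i S_i *)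
Definition evS (C : numClosedFieldType) (n : nat) (S : 'rV[C]_n) (g : 'cV[int]_n) : C :=
  (S *m map_mx (fun z : int => z%:~R) g) 0 0.

Definition DeltaM (C : numClosedFieldType) (n : nat) (Phi : seq 'cV[int]_n)
  (lam : 'rV[int]_n) (S : 'rV[C]_n) : seq 'cV[int]_n :=
  [seq a <- simple_roots Phi lam | evS S a == 0].

From mathcomp Require Import all_boot all_order all_algebra.
From mathcomp Require Import zify ring.
From Stdlib Require Import Classical.
Set Implicit Arguments. Unset Strict Implicit. Unset Printing Implicit Defensive.
Import Order.TTheory GRing.Theory Num.Theory.
Local Open Scope ring_scope.

(* Let [g] be a positive root with [(x z)^-1 g < 0] and put [beta = x^-1 g], so that
   [v^-1 g = w^-1 beta].  If [beta] is outside [Phi_L], then, since [W_L] permutes the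
   roots outside [Phi_L] without changing their signs,
   [sign (w^-1 beta) = sign beta = sign (z^-1 beta) < 0].  If [beta] is in [Phi_L], then
   [beta > 0] because [x] is minimal in [x W_L], and [w^-1 beta < 0] because [w] sends
   [Delta_L], hence [Phi_L^+], to negative roots.  Thus [N((x z)^-1)] is contained in
   [N(v^-1)], which avoids [Phi_M].
   The root-system facts used (positive roots are nonnegative combinations of the
   simple roots, which are linearly independent) are derived from the axioms of a
   reduced root datum through the W-invariant form
   [ip x y = sum_a <x, a^vee> <y, a^vee>]: it is definite on the span of the roots and
   the simple roots are pairwise obtuse for it. *)

Section Pairing.
Variable n : nat.
Implicit Types (x y u w : 'cV[int]_n).

Lemma pairingC x y : pairing x y = pairing y x.
Proof. by rewrite /pairing -[y^T *m x]trmxK trmx_mul trmxK mxE. Qed.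

Lemma pairingDl x x' y : pairing (x + x') y = pairing x y + pairing x' y.
Proof. by rewrite /pairing mulmxDr mxE. Qed.

Lemma pairingZl k x y : pairing (k *: x) y = k * pairing x y.
Proof. by rewrite /pairing -scalemxAr mxE. Qed.

Lemma pairing0l y : pairing 0 y = 0.
Proof. by rewrite /pairing mulmx0 mxE. Qed.

Lemma pairing_suml (I : Type) (r : seq I) (F : I -> 'cV[int]_n) y :
  pairing (\sum_(i <- r) F i) y = \sum_(i <- r) pairing (F i) y.
Proof. exact: (big_morph _ (fun x x' => pairingDl x x' y) (pairing0l y)). Qed.

Lemma pairingZr k x y : pairing x (k *: y) = k * pairing x y.
Proof. by rewrite pairingC pairingZl pairingC. Qed.

Lemma pairing_sumr (I : Type) (r : seq I) (F : I -> 'cV[int]_n) x :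
  pairing x (\sum_(i <- r) F i) = \sum_(i <- r) pairing x (F i).
Proof. by rewrite pairingC pairing_suml; under eq_bigr do rewrite pairingC. Qed.

Lemma pairing_mull (M : 'M[int]_n) x y : pairing (M *m x) y = pairing x (M^T *m y).
Proof. by rewrite /pairing trmx_mul trmxK mulmxA. Qed.

Lemma pairing_nondeg x : (forall y, pairing x y = 0) -> x = 0.
Proof.
move=> x0; apply/matrixP => i j; rewrite [j]ord1 mxE -(x0 (delta_mx i 0)).
by rewrite /pairing trmx_delta -rowE mxE.
Qed.

Lemma refl_apply u w x : refl u w *m x = x - pairing x w *: u.
Proof. by rewrite /refl mulmxBl mul1mx -mulmxA [w^T *m x]mx11_scalar mul_mx_scalar. Qed.

Lemma trmx_refl u w : (refl u w)^T = refl w u.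
Proof. by rewrite /refl raddfB /= trmx1 trmx_mul trmxK. Qed.

Section Involution.
Variables u w : 'cV[int]_n.
Hypothesis uw2 : pairing u w = 2.

Lemma refl_self : refl u w *m u = - u.
Proof. by rewrite refl_apply uw2 scaler_nat mulr2n opprD addrA subrr sub0r. Qed.

Lemma reflK (x : 'cV[int]_n) : refl u w *m (refl u w *m x) = x.
Proof.
rewrite (refl_apply u w x) mulmxBr -scalemxAr refl_self (refl_apply u w x).
by rewrite scalerN opprK subrK.
Qed.

Lemma refl_mulmx_refl : refl u w *m refl u w = 1%:M.
Proof.
rewrite {1}/refl mulmxBl mul1mx /refl mulmxBr mulmx1 -!mulmxA (mulmxA w^T).
rewrite [w^T *m u]mx11_scalar -/(pairing u w) uw2 mul_scalar_mx -scalemxAr.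
by rewrite scaler_nat mulr2n opprB addrK subrK.
Qed.
End Involution.
End Pairing.

Section Form.
Variables (n : nat) (R : seq 'cV[int]_n).
Implicit Types (x y u w : 'cV[int]_n).

Definition form x y : int := \sum_(c <- R) pairing x c * pairing y c.

Lemma formC x y : form x y = form y x.
Proof. by apply: eq_bigr => c _; rewrite mulrC. Qed.

Lemma formDl x x' y : form (x + x') y = form x y + form x' y.
Proof. by rewrite /form -big_split; apply: eq_bigr => c _; rewrite pairingDl mulrDl. Qed.

Lemma formZl k x y : form (k *: x) y = k * form x y.
Proof. by rewrite /form mulr_sumr; apply: eq_bigr => c _; rewrite pairingZl mulrA. Qed.

Lemma formNl x y : form (- x) y = - form x y.
Proof. by rewrite -scaleN1r formZl mulN1r. Qed.

Lemma formBl x x' y : form (x - x') y = form x y - form x' y.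
Proof. by rewrite formDl formNl. Qed.

Lemma formZr k x y : form x (k *: y) = k * form x y.
Proof. by rewrite formC formZl formC. Qed.

Lemma formNr x y : form x (- y) = - form x y.
Proof. by rewrite formC formNl formC. Qed.

Lemma formBr x y y' : form x (y - y') = form x y - form x y'.
Proof. by rewrite formC formBl !(formC x). Qed.

Lemma form_suml (I : Type) (r : seq I) (P : pred I) (F : I -> 'cV[int]_n) y :
  form (\sum_(i <- r | P i) F i) y = \sum_(i <- r | P i) form (F i) y.
Proof.
apply: (big_morph (form^~ y) (fun x x' => formDl x x' y)).
by rewrite /form big1 // => c _; rewrite pairing0l mul0r.
Qed.

Lemma form_sumr (I : Type) (r : seq I) (P : pred I) (F : I -> 'cV[int]_n) x :
  form x (\sum_(i <- r | P i) F i) = \sum_(i <- r | P i) form x (F i).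
Proof. by rewrite formC form_suml; under eq_bigr do rewrite formC. Qed.

Lemma form_ge0 x : 0 <= form x x.
Proof. by apply: sumr_ge0 => c _; rewrite -expr2 sqr_ge0. Qed.

Lemma form_gt0 x c : c \in R -> pairing x c != 0 -> 0 < form x x.
Proof.
move=> cR xc; rewrite /form (big_rem c) //= ltr_pwDl ?mulf_neq0 //.
- by rewrite -expr2 exprn_even_gt0.
- by apply: sumr_ge0 => d _; rewrite -expr2 sqr_ge0.
Qed.

Lemma form_eq0 x : form x x = 0 -> forall c, c \in R -> pairing x c = 0.
Proof.
move/eqP; rewrite psumr_eq0 => [/allP x0 c /x0|c _]; last by rewrite -expr2 sqr_ge0.
by rewrite mulf_eq0 orbb => /eqP.
Qed.

Section Reflection.
Variables u w : 'cV[int]_n.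
Hypotheses (uR : uniq R) (uw2 : pairing u w = 2).
Hypothesis reflR : {in R, forall c, refl w u *m c \in R}.

Lemma form_refl x y : form (refl u w *m x) (refl u w *m y) = form x y.
Proof.
have wu2 : pairing w u = 2 by rewrite pairingC.
rewrite /form; under eq_bigr do rewrite !pairing_mull trmx_refl.
rewrite -(big_map (mulmx (refl w u)) predT (fun c => pairing x c * pairing y c)).
apply/perm_big/uniq_perm; rewrite ?map_inj_uniq //; first exact: can_inj (reflK wu2).
move=> c; apply/mapP/idP => [[d dR ->]|cR]; first exact: reflR.
by exists (refl w u *m c); rewrite ?reflR ?reflK.
Qed.

Lemma form_refl_pairing x : pairing x w * form u u = 2 * form x u.
Proof.
have := form_refl x u; rewrite refl_self // refl_apply formNr formBl formZl.
by move=> h; lia.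
Qed.

End Reflection.
End Form.

Lemma invmx_mul (m : nat) (A B : 'M[int]_m) : A \in unitmx -> B \in unitmx ->
  invmx (A *m B) = invmx B *m invmx A.
Proof.
move=> uA uB; have uAB : A *m B \in unitmx by rewrite unitmx_mul uA.
by rewrite -[RHS](mulmxK uAB) mulmxA mulmxKV // mulVmx // mul1mx.
Qed.

Lemma sum_if_eq (R : pzRingType) (V : lmodType R) (s : seq V) (a : V) (k : R) :
  uniq s -> a \in s -> \sum_(b <- s) (if b == a then k else 0) *: b = k *: a.
Proof.
move=> s_uniq sa; rewrite (big_rem a) //= eqxx big_seq big1 ?addr0 // => b.
case: eqP => [->|_ _]; last by rewrite scale0r.
by move: s_uniq; rewrite (perm_uniq (perm_to_rem sa)) /= => /andP[/negP].
Qed.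

Section RootDatum.
Variables (n : nat) (Phi : seq 'cV[int]_n) (cor : 'cV[int]_n -> 'cV[int]_n).
Variable lam : 'rV[int]_n.
Hypotheses (hRD : is_root_datum Phi cor) (hlam : regular_functional Phi lam).
Local Notation vec := 'cV[int]_n.
Local Notation Phi_pos := (posroots Phi lam).
Local Notation Delta := (simple_roots Phi lam).
Local Notation s := (sref cor).
Implicit Types (a b c g x y : vec) (gens : seq vec).

Lemma roots_uniq : uniq Phi.
Proof. by case: hRD. Qed.

Lemma pairing_coroot a : a \in Phi -> pairing a (cor a) = 2.
Proof. by case: hRD => _ [_ [h _]]; apply: h. Qed.

Lemma coroot_inj : {in Phi &, injective cor}.
Proof. by case: hRD => _ [_ [_ [h _]]]; apply: h. Qed.

Lemma sref_root a b : a \in Phi -> b \in Phi -> s a *m b \in Phi.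
Proof. by case: hRD => _ [_ [_ [_ [h _]]]]; apply: h. Qed.

Lemma coroots_refl a c :
  a \in Phi -> c \in map cor Phi -> refl (cor a) a *m c \in map cor Phi.
Proof. by case: hRD => _ [_ [_ [_ [_ [h _]]]]] aPhi /mapP[b bPhi ->]; apply: h. Qed.

Lemma sref_apply a x : s a *m x = x - pairing x (cor a) *: a.
Proof. exact: refl_apply. Qed.

Lemma sref_mulmx_sref a : a \in Phi -> s a *m s a = 1%:M.
Proof. by move=> aPhi; apply/refl_mulmx_refl/pairing_coroot. Qed.

Lemma rootN a : a \in Phi -> - a \in Phi.
Proof. by move=> aPhi; rewrite -(refl_self (pairing_coroot aPhi)) sref_root. Qed.

Definition lamv x : int := (lam *m x) 0 0.

Lemma lamvD x y : lamv (x + y) = lamv x + lamv y.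
Proof. by rewrite /lamv mulmxDr mxE. Qed.

Lemma lamvZ k x : lamv (k *: x) = k * lamv x.
Proof. by rewrite /lamv -scalemxAr mxE. Qed.

Lemma lamvN x : lamv (- x) = - lamv x.
Proof. by rewrite -scaleN1r lamvZ mulN1r. Qed.

Lemma lamv_sum (I : Type) (r : seq I) (P : pred I) (F : I -> vec) :
  lamv (\sum_(i <- r | P i) F i) = \sum_(i <- r | P i) lamv (F i).
Proof. by apply: (big_morph lamv lamvD); rewrite /lamv mulmx0 mxE. Qed.

Lemma posrootsE a : (a \in Phi_pos) = (a \in Phi) && (0 < lamv a).
Proof. by rewrite mem_filter andbC. Qed.

Lemma root_lt0 a : a \in Phi -> (lamv a < 0) = ~~ (0 < lamv a).
Proof. by move=> aPhi; rewrite -leNgt le_eqVlt (negbTE (hlam aPhi)). Qed.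

Lemma simple_posroot a : a \in Delta -> a \in Phi_pos.
Proof. by rewrite mem_filter => /andP[]. Qed.

Lemma simple_root a : a \in Delta -> a \in Phi.
Proof. by move/simple_posroot; rewrite posrootsE => /andP[]. Qed.

Lemma simple_lamv_gt0 a : a \in Delta -> 0 < lamv a.
Proof. by move/simple_posroot; rewrite posrootsE => /andP[]. Qed.

Lemma simple_roots_uniq : uniq Delta.
Proof. by rewrite !filter_uniq // roots_uniq. Qed.

Lemma gen_by_mul gens u u' :
  gen_by cor gens u -> gen_by cor gens u' -> gen_by cor gens (u *m u').
Proof.
move=> + gu'; elim=> [|a w aG _ IH]; first by rewrite mul1mx.
by rewrite -mulmxA; apply: gen_byS.
Qed.

Lemma gen_by_sref gens a : a \in gens -> gen_by cor gens (s a).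
Proof. by move=> aG; rewrite -[s a]mulmx1; apply/gen_byS/gen_by1. Qed.

Lemma gen_by_sub gens gens' u :
  {subset gens <= gens'} -> gen_by cor gens u -> gen_by cor gens' u.
Proof.
by move=> sG; elim=> [|a w aG _ IH]; [apply: gen_by1 | apply: gen_byS => //; apply: sG].
Qed.

Section Generated.
Variable gens : seq vec.
Hypothesis gensPhi : {subset gens <= Phi}.

Lemma gen_by_root u b : gen_by cor gens u -> b \in Phi -> u *m b \in Phi.
Proof.
move=> + bPhi; elim=> [|a w aG _ IH]; first by rewrite mul1mx.
by rewrite -mulmxA; apply: sref_root => //; apply: gensPhi.
Qed.

Lemma gen_by_inv u : gen_by cor gens u -> u \in unitmx /\ gen_by cor gens (invmx u).
Proof.
elim=> [|a w aG _ [uw IH]]; first by rewrite invmx1 unitmx1; split=> //; apply: gen_by1.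
have ssK := sref_mulmx_sref (gensPhi aG); have [us _] := mulmx1_unit ssK.
have invs : invmx (s a) = s a by rewrite -[LHS]mul1mx -ssK mulmxK.
split; first by rewrite unitmx_mul us.
by rewrite invmx_mul // invs; apply/gen_by_mul/gen_by_sref.
Qed.

End Generated.

Lemma Weyl_root u b : Weyl Phi cor u -> b \in Phi -> u *m b \in Phi.
Proof. exact: (gen_by_root (fun a => id)). Qed.

Lemma Weyl_inv u : Weyl Phi cor u -> u \in unitmx /\ Weyl Phi cor (invmx u).
Proof. exact: (gen_by_inv (fun a => id)). Qed.

Local Notation ip := (form (map cor Phi)).
Local Notation coform := (form Phi).

Lemma ip_refl_pairing x a : a \in Phi -> pairing x (cor a) * ip a a = 2 * ip x a.
Proof.
move=> aPhi; apply: form_refl_pairing; last by move=> c; apply: coroots_refl.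
- by rewrite map_inj_in_uniq ?roots_uniq //; apply: coroot_inj.
- exact: pairing_coroot.
Qed.

Lemma ip_gt0 a : a \in Phi -> 0 < ip a a.
Proof. by move=> aPhi; apply: (form_gt0 (map_f cor aPhi)); rewrite pairing_coroot. Qed.

Lemma coform_refl_pairing y a :
  a \in Phi -> pairing y a * coform (cor a) (cor a) = 2 * coform y (cor a).
Proof.
move=> aPhi; apply: form_refl_pairing; first exact: roots_uniq.
- by rewrite pairingC pairing_coroot.
- by move=> b; apply: sref_root.
Qed.

Lemma coform_gt0 a : a \in Phi -> 0 < coform (cor a) (cor a).
Proof. by move=> aPhi; apply: (form_gt0 aPhi); rewrite pairingC pairing_coroot. Qed.

(* Up to the factor [N / 2], [x] is the [coform]-dual of the coroot combination [z]:
   since [<x, z> = 0], [z] is [coform]-isotropic, so [coform _ z = 0] and then [x = 0]. *)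
Lemma in_span_orth_eq0 (r : seq vec) g : {subset r <= Phi} -> in_span r g ->
  (forall a, a \in Phi -> pairing g (cor a) = 0) -> g = 0.
Proof.
move=> rPhi [c ->] x_orth; set x := \sum_(b <- r) _ in x_orth *.
pose K b := coform (cor b) (cor b); pose N := \prod_(b <- r) K b.
pose z := \sum_(b <- r) (c b * \prod_(b' <- rem b r) K b') *: cor b.
have N_neq0 : N != 0.
  by rewrite prodf_seq_neq0; apply/allP => b /rPhi/coform_gt0/lt0r_neq0.
have Nx y : N * pairing x y = 2 * coform y z.
  rewrite pairing_suml form_sumr !mulr_sumr; apply: eq_big_seq => b br.
  rewrite pairingZl formZr /N (big_rem b br) /= -/(K b).
  by rewrite [RHS]mulrCA -coform_refl_pairing ?rPhi // (pairingC y) -/(K b); ring.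
have xz : pairing x z = 0.
  by rewrite pairing_sumr big_seq big1 // => b br; rewrite pairingZr x_orth ?rPhi ?mulr0.
have /form_eq0 z_orth : coform z z = 0 by have := Nx z; rewrite xz mulr0; lia.
apply: pairing_nondeg => y; apply/eqP; rewrite -(mulrI_eq0 _ (lregP N_neq0)) Nx.
by rewrite /form big_seq big1 ?mulr0 // => a aPhi; rewrite z_orth ?mulr0.
Qed.

Lemma posroot_nonneg_comb g : g \in Phi_pos ->
  exists2 d : vec -> int, (forall b, 0 <= d b) & g = \sum_(b <- Delta) d b *: b.
Proof.
have [m] := ubnP `|lamv g|%N; elim: m g => // m IH g; rewrite ltnS => g_le gpos.
case gD : (g \in Delta).
  exists (fun b => if b == g then 1 else 0) => [b|]; first by case: eqP.
  by rewrite sum_if_eq ?simple_roots_uniq ?scale1r.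
move: gD; rewrite mem_filter gpos andbT => /negbFE/hasP[b bpos gbpos].
have lamv_pos a : a \in Phi_pos -> 0 < lamv a by rewrite posrootsE => /andP[].
have := lamv_pos _ gbpos; rewrite lamvD lamvN => gb_gt0.
have b_gt0 := lamv_pos _ bpos.
have [d1 d1_ge0 bE] := IH b ltac:(lia) bpos.
have [d2 d2_ge0 gbE] := IH (g - b) ltac:(rewrite lamvD lamvN; lia) gbpos.
exists (fun a => d1 a + d2 a) => [a|]; first exact: addr_ge0.
under eq_bigr do rewrite scalerDl.
by rewrite big_split /= -bE -gbE addrC subrK.
Qed.

Lemma simple_sub_notin_roots b b' : b \in Delta -> b' \in Delta -> b' - b \notin Phi.
Proof.
move=> bD b'D; apply/negP => subPhi.
have not_simple a a' : a \in Delta -> a' \in Phi_pos -> a - a' \in Phi_pos -> False.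
  by rewrite mem_filter => /andP[/hasP + _] a'pos aa'pos; apply; exists a'.
have [gt0|] := boolP (0 < lamv (b' - b)).
  by apply: (not_simple _ _ b'D (simple_posroot bD)); rewrite posrootsE subPhi.
rewrite -root_lt0 // => lt0; apply: (not_simple _ _ bD (simple_posroot b'D)).
by rewrite -opprB posrootsE rootN // lamvN oppr_gt0.
Qed.

(* If [ip b b' > 0], then [<b', b^vee>] and [<b, b'^vee>] are positive, and not [1] as
   [b' - b] is not a root; so [ip b b] and [ip b' b'] are at most [ip b b'], and
   [b - b'] is isotropic. *)
Lemma simple_obtuse b b' : b \in Delta -> b' \in Delta -> b != b' -> ip b b' <= 0.
Proof.
move=> bD b'D neq_bb'; rewrite leNgt; apply/negP => ipbb'_gt0.
have [bPhi b'Phi] := (simple_root bD, simple_root b'D).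
have p_rel := ip_refl_pairing b' bPhi; have q_rel := ip_refl_pairing b b'Phi.
rewrite (formC _ b' b) in p_rel; move: (ip_gt0 bPhi) (ip_gt0 b'Phi) => A_gt0 B_gt0.
have pairing_ne1 a a' : a \in Delta -> a' \in Delta -> pairing a' (cor a) != 1.
  move=> aD a'D; apply/eqP => p1; apply/negP: (simple_sub_notin_roots aD a'D).
  by rewrite -(scale1r a) -p1 -sref_apply sref_root ?simple_root.
move: (pairing_ne1 _ _ bD b'D) (pairing_ne1 _ _ b'D bD) => p_ne1 q_ne1.
have : ip (b - b') (b - b') <= 0.
  rewrite formBl !formBr (formC _ b' b); move: p_ne1 q_ne1 p_rel q_rel ipbb'_gt0.
  by move: (pairing b' (cor b)) (pairing b (cor b')) => p q; nia.
rewrite le_eqVlt ltNge form_ge0 orbF => /eqP/form_eq0 orth.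
suff /eqP : b - b' = 0 by rewrite subr_eq0 (negbTE neq_bb').
apply: (in_span_orth_eq0 (r := [:: b; b'])).
- by apply/allP; rewrite /= bPhi b'Phi.
- exists (fun a => if a == b then 1 else -1).
  by rewrite big_cons big_seq1 eqxx eq_sym (negbTE neq_bb') scale1r scaleN1r.
- by move=> a aPhi; apply/orth/map_f.
Qed.

Lemma nonneg_simple_comb_eq0 (P : pred vec) (d : vec -> int) :
  (forall b, P b -> 0 <= d b) -> \sum_(b <- Delta | P b) d b *: b = 0 ->
  forall b, b \in Delta -> P b -> d b = 0.
Proof.
move=> d_ge0 /(congr1 lamv); rewrite lamv_sum big_seq_cond {2}/lamv mulmx0 mxE => /eqP.
rewrite psumr_eq0 => [/allP d0 b bD Pb|b /andP[bD Pb]]; last first.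
  by rewrite lamvZ mulr_ge0 ?d_ge0 // ltW ?simple_lamv_gt0.
move: (d0 b bD); rewrite bD Pb lamvZ mulf_eq0 (gt_eqF (simple_lamv_gt0 bD)) orbF.
by move/eqP.
Qed.

(* Split the relation into its positive and negative parts [x = x']; obtuseness
   of [Delta] gives [ip x x = ip x x' <= 0], hence [x = 0]. *)
Lemma simple_roots_free (c : vec -> int) : \sum_(b <- Delta) c b *: b = 0 ->
  forall b, b \in Delta -> c b = 0.
Proof.
pose P b := 0 <= c b; rewrite (bigID P) /= => /eqP; rewrite addr_eq0 => /eqP xE.
set x := \sum_(b <- Delta | P b) _ in xE.
have ip_le0 : ip x x <= 0.
  rewrite {2}xE /x form_suml big_seq_cond; apply: sumr_le0 => b /andP[bD Pb].
  rewrite formZl formNr form_sumr -sumrN mulr_sumr big_seq_cond.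
  apply: sumr_le0 => b' /andP[b'D nPb']; rewrite formZr -mulNr mulrA.
  apply: mulr_ge0_le0; first by rewrite mulr_ge0 // oppr_ge0 ltW // ltNge.
  by apply: simple_obtuse => //; apply: contraNneq nPb' => <-.
have /form_eq0 x_orth : ip x x = 0 by apply/le_anti; rewrite ip_le0 form_ge0.
have x0 : x = 0.
  apply: (in_span_orth_eq0 (r := Delta)) => [|| a aPhi]; first exact: simple_root.
    exists (fun b => if P b then c b else 0); rewrite /x big_mkcond.
    by apply: eq_bigr => b _; case: ifP; rewrite ?scale0r.
  exact/x_orth/map_f.
move=> b bD; have [Pb|nPb] := boolP (P b).
  by apply: (nonneg_simple_comb_eq0 (P := P)).
apply/eqP; rewrite -oppr_eq0; apply/eqP.
apply: (nonneg_simple_comb_eq0 (P := fun b => ~~ P b) (d := fun b => - c b)) => //.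
  by move=> a /= nPa; rewrite oppr_ge0 ltW // ltNge.
under eq_bigr do rewrite scaleNr.
by rewrite sumrN -xE x0.
Qed.

Lemma simple_comb_inj (c d : vec -> int) :
  \sum_(b <- Delta) c b *: b = \sum_(b <- Delta) d b *: b ->
  forall b, b \in Delta -> c b = d b.
Proof.
move=> cd b bD; apply/eqP; rewrite -subr_eq0; apply/eqP.
apply: (simple_roots_free (c := fun b => c b - d b)) => //.
by under eq_bigr do rewrite scalerBl; rewrite sumrB cd subrr.
Qed.

Lemma in_spanN gens g : in_span gens g -> in_span gens (- g).
Proof.
by case=> c ->; exists (fun b => - c b); rewrite -sumrN; apply: eq_bigr => b _; rewrite scaleNr.
Qed.

Lemma in_span_self gens a : uniq gens -> a \in gens -> in_span gens a.
Proof.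
by move=> uG aG; exists (fun b => if b == a then 1 else 0); rewrite sum_if_eq ?scale1r.
Qed.

Lemma in_span_sref gens a y : uniq gens -> a \in gens -> in_span gens y ->
  in_span gens (s a *m y).
Proof.
move=> uG aG [c ->]; rewrite sref_apply; set k := pairing _ (cor a).
exists (fun b => c b - (if b == a then k else 0)).
by rewrite -(sum_if_eq _ uG aG) -sumrB; apply: eq_bigr => b _; rewrite scalerBl.
Qed.

Lemma in_span_gen gens u y : uniq gens -> gen_by cor gens u -> in_span gens y ->
  in_span gens (u *m y).
Proof.
move=> uG + yG; elim=> [|a w aG _ IH]; first by rewrite mul1mx.
by rewrite -mulmxA; apply: in_span_sref.
Qed.

Section Parabolic.
Variable P : pred vec.
Local Notation DL := (filter P Delta).

Lemma parabolic_uniq : uniq DL.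
Proof. exact/filter_uniq/simple_roots_uniq. Qed.

Lemma parabolic_roots : {subset DL <= Phi}.
Proof. by move=> a; rewrite mem_filter => /andP[_ /simple_root]. Qed.

Lemma parabolic_simple a : a \in DL -> a \in Delta.
Proof. by rewrite mem_filter => /andP[]. Qed.

Lemma in_span_parabolic g : in_span DL g ->
  exists2 c : vec -> int, g = \sum_(b <- Delta) c b *: b & forall b, ~~ P b -> c b = 0.
Proof.
case=> c ->; exists (fun b => if P b then c b else 0) => [|b /negbTE -> //].
by rewrite big_filter big_mkcond; apply: eq_bigr => b _; case: (P b); rewrite ?scale0r.
Qed.

(* Otherwise the nonnegative expansions of [d] and [- s_a d] add up to
   [<d, a^vee> a], which forces [d] to be a multiple of [a]. *)
Lemma sref_posroot_outside a d : a \in DL -> d \in Phi_pos -> ~ in_span DL d ->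
  0 < lamv (s a *m d).
Proof.
move=> aDL dpos dL; have aD := parabolic_simple aDL; have aPhi := simple_root aD.
have dPhi : d \in Phi by move: dpos; rewrite posrootsE => /andP[].
have sdPhi := sref_root aPhi dPhi; apply/contraT; rewrite -root_lt0 // => sd_lt0.
have sdpos : - (s a *m d) \in Phi_pos by rewrite posrootsE rootN // lamvN oppr_gt0.
have [d1 d1_ge0 d1E] := posroot_nonneg_comb dpos.
have [d2 d2_ge0 d2E] := posroot_nonneg_comb sdpos.
have /simple_comb_inj coeffE : \sum_(b <- Delta) (d1 b + d2 b) *: b =
    \sum_(b <- Delta) (if b == a then pairing d (cor a) else 0) *: b.
  under eq_bigr do rewrite scalerDl.
  rewrite big_split /= -d1E -d2E sum_if_eq ?simple_roots_uniq //.
  by rewrite sref_apply opprB addrC subrK.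
exfalso; apply: dL; exists (fun b => if b == a then d1 a else 0).
rewrite sum_if_eq ?parabolic_uniq // d1E -(sum_if_eq _ simple_roots_uniq aD).
apply: eq_big_seq => b bD; case: eqP => [-> //|/eqP neq_ba].
have -> // : d1 b = 0.
by move: (coeffE b bD) (d1_ge0 b) (d2_ge0 b); rewrite (negbTE neq_ba); lia.
Qed.

Lemma sref_sign_outside a d : a \in DL -> d \in Phi -> ~ in_span DL d ->
  (0 < lamv (s a *m d)) = (0 < lamv d).
Proof.
move=> aDL dPhi dL; have [dpos|] := boolP (0 < lamv d).
  by apply: sref_posroot_outside => //; rewrite posrootsE dPhi.
rewrite -root_lt0 // => d_lt0; apply/negbTE; rewrite -root_lt0; last first.
  exact/sref_root/dPhi/simple_root/parabolic_simple.
have := @sref_posroot_outside a (- d) aDL.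
rewrite posrootsE rootN // lamvN oppr_gt0 d_lt0 mulmxN lamvN oppr_gt0; apply=> //.
by move/in_spanN; rewrite opprK.
Qed.

Lemma gen_notin_span u d : gen_by cor DL u -> ~ in_span DL d -> ~ in_span DL (u *m d).
Proof.
move=> uL dL /(in_span_gen parabolic_uniq (gen_by_inv parabolic_roots uL).2).
by rewrite mulmxA mulVmx ?mul1mx //; case: (gen_by_inv parabolic_roots uL).
Qed.

Lemma gen_sign_outside u d : gen_by cor DL u -> d \in Phi -> ~ in_span DL d ->
  (0 < lamv (u *m d)) = (0 < lamv d).
Proof.
move=> + dPhi dL; elim=> [|a w aDL wL IH]; first by rewrite mul1mx.
rewrite -mulmxA sref_sign_outside //.
  exact: (gen_by_root parabolic_roots wL dPhi).
exact: gen_notin_span.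
Qed.

Lemma gen_neg_inside w g : gen_by cor DL w -> (forall b, b \in DL -> lamv (w *m b) < 0) ->
  g \in Phi_pos -> in_span DL g -> lamv (w *m g) < 0.
Proof.
move=> wL w_neg gpos gL.
have gPhi : g \in Phi by move: gpos; rewrite posrootsE => /andP[].
have [d d_ge0 dE] := posroot_nonneg_comb gpos; have [c cE c0] := in_span_parabolic gL.
have coeffE := simple_comb_inj (etrans (esym dE) cE).
rewrite lt_neqAle hlam ?(gen_by_root parabolic_roots wL) //=.
rewrite dE mulmx_sumr lamv_sum big_seq; apply: sumr_le0 => b bD.
rewrite -scalemxAr lamvZ; have [Pb|nPb] := boolP (P b).
  by rewrite mulr_ge0_le0 // ltW // w_neg // mem_filter Pb.
by rewrite coeffE // c0 // mul0r.
Qed.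

Lemma right_min_sign_inside (x : 'M[int]_n) g :
  right_min Phi cor lam DL x -> g \in Phi -> in_span DL g ->
  (0 < lamv (x *m g)) = (0 < lamv g).
Proof.
case=> xW x_min gPhi gL.
have xPhi h : h \in Phi -> x *m h \in Phi by apply: Weyl_root.
have pos_pos h : h \in Phi -> in_span DL h -> 0 < lamv h -> 0 < lamv (x *m h).
  move=> hPhi hL h_gt0; apply/contraT; rewrite -root_lt0 ?xPhi // => xh_lt0.
  have /x_min/(_ hL) // : inv_set Phi lam x h.
  by rewrite /inv_set !posrootsE hPhi h_gt0 rootN ?xPhi // lamvN oppr_gt0.
apply/idP/idP => [xg_gt0|]; last exact: pos_pos.
apply/contraT; rewrite -root_lt0 // => g_lt0.
have := pos_pos (- g) (rootN gPhi) (in_spanN gL); rewrite lamvN oppr_gt0 => /(_ g_lt0).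
by rewrite mulmxN lamvN oppr_gt0 ltNge (ltW xg_gt0).
Qed.

Lemma inv_set_invmx_subset (x w z : 'M[int]_n) g :
  right_min Phi cor lam DL x -> gen_by cor DL w ->
  (forall b, b \in DL -> lamv (x *m w *m b) < 0) -> gen_by cor DL z ->
  inv_set Phi lam (invmx (x *m z)) g -> inv_set Phi lam (invmx (x *m w)) g.
Proof.
move=> xR wL v_neg zL [gpos]; have [xW _] := xR.
have [xu xiW] := Weyl_inv xW.
have [[wu wiL] [zu ziL]] := (gen_by_inv parabolic_roots wL, gen_by_inv parabolic_roots zL).
have gPhi : g \in Phi by move: gpos; rewrite posrootsE => /andP[].
rewrite !invmx_mul // -!mulmxA; set beta := invmx x *m g.
have betaPhi : beta \in Phi := Weyl_root xiW gPhi.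
have xbeta : x *m beta = g by rewrite mulmxA mulmxV ?mul1mx.
have wibetaPhi := gen_by_root parabolic_roots wiL betaPhi.
rewrite !posrootsE !lamvN !oppr_gt0 => /andP[_ zibeta_lt0]; split=> //.
rewrite -mulmxA -/beta posrootsE rootN // lamvN oppr_gt0 root_lt0 //; apply/negP => wibeta_gt0.
have [betaL|betaL] := classic (in_span DL beta).
  have w_neg b : b \in DL -> lamv (w *m b) < 0.
    move=> bDL; have wbPhi := gen_by_root parabolic_roots wL (parabolic_roots bDL).
    rewrite root_lt0 // -(right_min_sign_inside xR wbPhi); last first.
      exact/(in_span_gen parabolic_uniq wL)/in_span_self/bDL/parabolic_uniq.
    by rewrite mulmxA -root_lt0 ?v_neg // -mulmxA Weyl_root.
  have : lamv (w *m (invmx w *m beta)) < 0.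
    apply: gen_neg_inside w_neg _ _ => //; first by rewrite posrootsE wibetaPhi.
    exact: in_span_gen parabolic_uniq wiL betaL.
  rewrite mulmxA mulmxV // mul1mx ltNge => /negP; apply.
  rewrite ltW // -(right_min_sign_inside xR) // xbeta.
  by move: gpos; rewrite posrootsE => /andP[].
move: wibeta_gt0; rewrite (gen_sign_outside wiL) // -(gen_sign_outside ziL) //.
by rewrite ltNge (ltW zibeta_lt0).
Qed.

Lemma left_min_mulmx (D : seq vec) (x w z : 'M[int]_n) :
  left_min Phi cor lam D (x *m w) ->
  right_min Phi cor lam DL x -> gen_by cor DL w ->
  (forall b, b \in DL -> lamv (x *m w *m b) < 0) -> gen_by cor DL z ->
  left_min Phi cor lam D (x *m z).
Proof.
case=> _ v_min xR wL v_neg zL; split.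
  exact: gen_by_mul xR.1 (gen_by_sub parabolic_roots zL).
by move=> g /(inv_set_invmx_subset xR wL v_neg zL); apply: v_min.
Qed.

End Parabolic.
End RootDatum.

Theorem mainTheorem2 (C : numClosedFieldType) (n : nat)
  (Phi : seq 'cV[int]_n) (cor : 'cV[int]_n -> 'cV[int]_n)
  (lam : 'rV[int]_n) (S : 'rV[C]_n)
  (hRD : is_root_datum Phi cor)
  (hlam : regular_functional Phi lam)
  (* S is not regular *)
  (hnonreg : exists2 g, g \in Phi & evS S g = 0)
  (* M = Z_G(S) is a standard Levi: Phi_M = Phi \cap span(Delta_M) *)
  (hstd : forall g, g \in Phi -> (evS S g = 0 <-> in_span (DeltaM Phi lam S) g))
  (v x w : 'M[int]_n)
  (hv : left_min Phi cor lam (DeltaM Phi lam S) v)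
  (hw : longest_in Phi cor lam (Rdesc Phi lam v) w)
  (hx : right_min Phi cor lam (Rdesc Phi lam v) x)
  (hvxw : v = x *m w) :
  forall z, gen_by cor (Rdesc Phi lam v) z ->
    left_min Phi cor lam (DeltaM Phi lam S) (x *m z).
Proof.
move=> z zL; subst v; have [wL _] := hw.
pose P a := - (x *m w *m a) \in posroots Phi lam.
apply: (left_min_mulmx hRD hlam (P := P) hv hx wL _ zL).
by move=> b; rewrite mem_filter /P posrootsE lamvN oppr_gt0 => /andP[/andP[]].
Qed.
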